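(* Let $d\ge 1$, let $\mathcal{A}\in\mathbb{R}^{n_1\times n_2\times\cdots\times n_d}$, let $p\in\{1,\dots,d\}$, and let $R$ be the number of nonzero $p$-fibers of $\mathcal{A}$. Then $\mathcal{A}$ is equal to a tensor train with TT ranks $r_0=r_d=1$ and $r_k=R$ for $1\le k\le d-1$; that is, there exist cores $\mathcal{G}^{(k)}\in\mathbb{R}^{r_{k-1}\times n_k\times r_k}$, $k=1,\dots,d$, with $$\mathcal{A}(i_1,\dots,i_d)=\mathcal{G}^{(1)}(:,i_1,:)\,\mathcal{G}^{(2)}(:,i_2,:)\cdots\mathcal{G}^{(d)}(:,i_d,:)\quad\text{for all }(i_1,\dots,i_d),$$ such that every core $\mathcal{G}^{(k)}$ with $k\neq p$ has all its entries in $\{0,1\}$ (i.e. $\mathcal{G}^{(k)}\in\{0,1\}^{r_{k-1}\times n_k\times r_k}$), while $\mathcal{G}^{(p)}\in\mathbb{R}^{r_{k-1}\times n_p\times r_p}$ is real-valued.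
   Context: For $p\in\{1,\dots,d\}$, a $p$-fiber of $\mathcal{A}$ is a vector obtained by fixing all indices except the $p$-th: for a fixed multi-index $(i_1,\dots,i_{p-1},i_{p+1},\dots,i_d)$, the vector $\mathcal{A}(i_1,\dots,i_{p-1},:,i_{p+1},\dots,i_d)\in\mathbb{R}^{n_p}$. A $p$-fiber is nonzero if it is not the zero vector. A tensor train (TT) with cores $\mathcal{G}^{(k)}\in\mathbb{R}^{r_{k-1}\times n_k\times r_k}$, $r_0=r_d=1$, represents the tensor whose entries are the products of the matrices $\mathcal{G}^{(k)}(:,i_k,:)\in\mathbb{R}^{r_{k-1}\times r_k}$ as displayed; the $r_k$ are called TT ranks. *)

From HB Require Import structures.
From mathcomp Require Import all_boot all_order all_algebra.
From mathcomp Require Import reals.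
Set Implicit Arguments. Unset Strict Implicit. Unset Printing Implicit Defensive.
Import Order.TTheory GRing.Theory Num.Theory.
Local Open Scope ring_scope.

Section TT.
Variable (R : realType) (d : nat) (n : 'I_d -> nat).

Definition mindex := {dffun forall k : 'I_d, 'I_(n k)}.

Definition tensor := mindex -> R.

(* The position of the p-fiber through i: all coordinates except the p-th. *)
Definition fiber_pos (p : 'I_d) (i : mindex)
  : {dffun forall k : 'I_d, option 'I_(n k)} :=
  [ffun k => if k == p then None else Some (i k)].

Definition fiber_nonzero (A : tensor) (p : 'I_d)
  (q : {dffun forall k : 'I_d, option 'I_(n k)}) : bool :=
  [exists i : mindex, (fiber_pos p i == q) && (A i != 0)].

Definition nnz_fibers (A : tensor) (p : 'I_d) : nat :=
  #|[set q | fiber_nonzero A p q]|.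

Definition tt_rank (Rk j : nat) : nat := if (j == 0)%N || (j == d) then 1%N else Rk.

Lemma tt_rank_d_gt0 Rk : (0 < tt_rank Rk d)%N.
Proof. by rewrite /tt_rank eqxx orbT. Qed.

Section Eval.
Variable (Rk : nat).
Variable (G : forall k : 'I_d, 'I_(n k) -> 'M[R]_(tt_rank Rk k, tt_rank Rk k.+1)).
Variable (i : mindex).

Fixpoint tt_left (m : nat) : (m <= d)%N -> 'M[R]_(1, tt_rank Rk m) :=
  match m return (m <= d)%N -> 'M[R]_(1, tt_rank Rk m) with
  | 0 => fun _ => (1%:M : 'M[R]_1)
  | m'.+1 => fun H => @tt_left m' (ltnW H) *m @G (Ordinal H) (i (Ordinal H))
  end.

Definition tt_eval : R :=
  @tt_left d (leqnn d) ord0 (Ordinal (tt_rank_d_gt0 Rk)).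
End Eval.
End TT.

From HB Require Import structures.
From mathcomp Require Import all_boot all_order all_algebra.
From mathcomp Require Import reals zify.
Import Order.TTheory GRing.Theory Num.Theory.
Local Open Scope ring_scope.
Set Implicit Arguments. Unset Strict Implicit. Unset Printing Implicit Defensive.

(* Let q_1, ..., q_R enumerate the nonzero p-fibers.  Every entry of A lies on
   exactly one p-fiber, so A(i) = sum_x prod_k u_k(i_k, x), where for k <> p the
   factor u_k(j, x) is the 0/1 indicator that q_x passes through coordinate j in
   mode k, and u_p(j, x) is the j-th entry of q_x.  Any such sum of R rank-one
   tensors is a tensor train with inner ranks R whose cores are diagonal,
   G^(k)(:, j, :) = diag(u_k(j, .)) (a row for the first core, a column for the
   last), so each entry of a core is 0 or an entry of u_k. *)

Lemma big_ord_ltnS (T : Type) (idx : T) (op : Monoid.com_law idx) d m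
    (F : 'I_d -> T) (ltmd : (m < d)%N) :
  \big[op/idx]_(k : 'I_d | (k < m.+1)%N) F k =
  op (\big[op/idx]_(k : 'I_d | (k < m)%N) F k) (F (Ordinal ltmd)).
Proof.
rewrite (bigD1 (Ordinal ltmd)) //= Monoid.mulmC; congr (op _ _).
apply: eq_bigl => k; rewrite ltnS ltn_neqAle andbC.
by congr andb; apply/negP/negP => [/eqP/val_inj|/eqP ->].
Qed.

Lemma big_subsingleton (T : Type) (idx : T) (op : Monoid.law idx) (I : finType)
    (P : pred I) (F : I -> T) :
  {in P &, forall x y, x = y} ->
  \big[op/idx]_(x | P x) F x = idx \/ exists x, \big[op/idx]_(x | P x) F x = F x.
Proof.
case: (pickP P) => [x Px | P0] P_uniq; last by left; apply: big_pred0.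
right; exists x; apply: big_pred1 => y /=.
by apply/idP/eqP => [Py | ->]; [apply: P_uniq | ].
Qed.

Lemma tt_leftS (R : realType) d (n : 'I_d -> nat) Rk
    (G : forall k : 'I_d, 'I_(n k) -> 'M[R]_(tt_rank d Rk k, tt_rank d Rk k.+1))
    (i : mindex n) m (ltmd : (m < d)%N) :
  tt_left G i ltmd = tt_left G i (ltnW ltmd) *m G _ (i (Ordinal ltmd)).
Proof. by []. Qed.

Section CPToTT.
Variables (R : realType) (d : nat) (n : 'I_d -> nat) (Rk : nat).
Variable u : forall k : 'I_d, 'I_(n k) -> 'I_Rk -> R.

(* Index [a] of the bond [m] (between cores [m - 1] and [m]) carries the term [x];
   the boundary bonds have dimension 1 and carry every term. *)
Definition bond_match (m a : nat) (x : 'I_Rk) : bool :=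
  [|| m == 0, m == d | a == x :> nat]%N.

Definition bond_vec (m : nat) (x : 'I_Rk) : 'rV[R]_(tt_rank d Rk m) :=
  \row_a (bond_match m a x)%:R.

Definition cp_core (k : 'I_d) (j : 'I_(n k)) :
    'M[R]_(tt_rank d Rk k, tt_rank d Rk k.+1) :=
  \sum_(x < Rk) u j x *: ((bond_vec k x)^T *m bond_vec k.+1 x).

Lemma tt_rank_inner m : (0 < m < d)%N -> tt_rank d Rk m = Rk.
Proof. by case/andP=> m_gt0 ltmd; rewrite /tt_rank gtn_eqF // ltn_eqF. Qed.

Lemma bond_vec_inner m x y : (0 < m < d)%N ->
  bond_vec m x *m (bond_vec m y)^T = (x == y)%:R%:M.
Proof.
move=> /[dup] /andP[m_gt0 ltmd] /tt_rank_inner rkm.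
apply/matrixP => a b; rewrite !ord1 !mxE.
under eq_bigr => c _ do
  rewrite !mxE /bond_match gtn_eqF // ltn_eqF // -natrM mulnb /=.
rewrite (eq_bigr (fun c : 'I_(tt_rank d Rk m) =>
                    if c == x :> nat then (c == y :> nat)%:R else 0)); last first.
  by move=> c _; case: (c == x :> nat).
by rewrite -big_mkcond (big_ord1_eq _ (fun c => (c == y :> nat)%:R)) rkm ltn_ord.
Qed.

Lemma bond_vec0 x : bond_vec 0 x = 1%:M.
Proof. by apply/matrixP => a b; rewrite !ord1 !mxE /bond_match. Qed.

Lemma tt_left_cp_core (i : mindex n) m (lemd : (m <= d)%N) : (0 < m)%N ->
  tt_left cp_core i lemd =
  \sum_(x < Rk) (\prod_(k : 'I_d | (k < m)%N) u (i k) x) *: bond_vec m x.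
Proof.
elim: m lemd => [//|[|m] IH] ltmd _; rewrite tt_leftS /cp_core.
  rewrite mul1mx; apply: eq_bigr => x _.
  by rewrite bond_vec0 trmx1 mul1mx big_ord_ltnS big_pred0 //= mul1r.
rewrite IH // mulmx_suml; apply: eq_bigr => x _; rewrite mulmx_sumr.
under eq_bigr => y _ do rewrite -scalemxAl -scalemxAr scalerA mulmxA
  bond_vec_inner // mul_scalar_mx scalerA.
rewrite (bigD1 x) //= eqxx mulr1 (big_ord_ltnS _ _ ltmd).
rewrite [X in _ + X]big1 ?addr0 // => y.
by rewrite eq_sym => /negbTE ->; rewrite mulr0 scale0r.
Qed.

Lemma tt_eval_cp_core (i : mindex n) : (0 < d)%N ->
  tt_eval cp_core i = \sum_(x < Rk) \prod_(k < d) u (i k) x.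
Proof.
move=> d_gt0; rewrite /tt_eval tt_left_cp_core // summxE.
apply: eq_bigr => x _; rewrite !mxE /bond_match eqxx orbT mulr1.
by apply: eq_bigl => k; rewrite ltn_ord.
Qed.

Lemma cp_coreE k (j : 'I_(n k)) a b :
  cp_core j a b = \sum_(x < Rk | bond_match k a x && bond_match k.+1 b x) u j x.
Proof.
rewrite summxE [RHS]big_mkcond; apply: eq_bigr => x _.
by rewrite !mxE big_ord1 !mxE -natrM mulnb; case: ifP; rewrite ?mulr1 ?mulr0.
Qed.

Lemma bond_match_uniq k a b : (1 < d)%N -> (k < d)%N ->
  {in [pred x | bond_match k a x && bond_match k.+1 b x] &, forall x y, x = y}.
Proof.
move=> lt1d ltkd x y; rewrite !inE /bond_match /= (ltn_eqF ltkd).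
have [-> | k_gt0] := posnP k; rewrite ?(ltn_eqF lt1d) ?(gtn_eqF k_gt0) /=.
  by move=> /eqP bx /eqP by_; apply: ord_inj; rewrite -bx -by_.
by move=> /andP[/eqP ax _] /andP[/eqP ay _]; apply: ord_inj; rewrite -ax -ay.
Qed.

Lemma cp_core_entry k (j : 'I_(n k)) a b : (1 < d)%N ->
  cp_core j a b = 0 \/ exists x, cp_core j a b = u j x.
Proof.
by move=> lt1d; rewrite cp_coreE; apply: big_subsingleton; apply: bond_match_uniq.
Qed.

End CPToTT.

Section Fibers.
Variables (R : realType) (d : nat) (n : 'I_d -> nat) (A : tensor R n) (p : 'I_d).

Local Notation position := {dffun forall k : 'I_d, option 'I_(n k)}.

Definition nz_fibers : {set position} := [set q | fiber_nonzero A p q].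

(* For [k = p] the sum has at most one term: the [j]-th entry of the fiber at
   [q]. *)
Definition fiber_factor (q : position) (k : 'I_d) (j : 'I_(n k)) : R :=
  if k == p then \sum_(i : mindex n | (fiber_pos p i == q) && (i k == j)) A i
  else (q k == Some j)%:R.
Arguments fiber_factor : clear implicits.

Lemma fiber_pos_p (i : mindex n) : fiber_pos p i p = None.
Proof. by rewrite ffunE eqxx. Qed.

Lemma fiber_pos_inj (i1 i2 : mindex n) :
  fiber_pos p i1 = fiber_pos p i2 -> i1 p = i2 p -> i1 = i2.
Proof.
move=> /ffunP eq12 eq12p; apply/ffunP => k.
have [-> // | kp] := eqVneq k p.
by move: (eq12 k); rewrite !ffunE (negbTE kp) => -[].
Qed.

Lemma fiber_factor_pos (i : mindex n) :
  fiber_factor (fiber_pos p i) p (i p) = A i.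
Proof.
rewrite /fiber_factor eqxx (big_pred1 i) // => i' /=.
by apply/andP/eqP => [[/eqP ? /eqP ?] | ->]; first exact: fiber_pos_inj.
Qed.

Lemma prod_fiber_factor (q : position) (i : mindex n) : q p = None ->
  \prod_k fiber_factor q k (i k) = (q == fiber_pos p i)%:R * A i.
Proof.
move=> qp; rewrite (bigD1 p) //=.
have [-> | ] := eqVneq q (fiber_pos p i).
  rewrite fiber_factor_pos big1 ?mulr1 ?mul1r // => k kp.
  by rewrite /fiber_factor (negbTE kp) ffunE (negbTE kp) eqxx.
rewrite mul0r; apply: contra_neq_eq.
rewrite mulf_eq0 negb_or => /andP[_ /prodf_neq0 qi].
apply/ffunP => k; rewrite ffunE; have [-> // | kp] := eqVneq k p.
move: (qi k kp); rewrite /fiber_factor (negbTE kp) pnatr_eq0 eqb0 negbK.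
by move=> /eqP.
Qed.

Lemma nz_fiber_p q : q \in nz_fibers -> q p = None.
Proof. by rewrite inE => /existsP[i /andP[/eqP <- _]]; apply: fiber_pos_p. Qed.

Lemma sum_nz_fibers (i : mindex n) :
  A i = \sum_(q in nz_fibers) \prod_k fiber_factor q k (i k).
Proof.
under eq_bigr => q /nz_fiber_p qp do rewrite prod_fiber_factor //.
have [Fi | nFi] := boolP (fiber_pos p i \in nz_fibers).
  rewrite (bigD1 _ Fi) //= eqxx mul1r big1 ?addr0 // => q /andP[_ /negbTE ->].
  by rewrite mul0r.
have -> : A i = 0.
  apply/eqP; move: nFi; rewrite inE negb_exists => /forallP/(_ i).
  by rewrite eqxx negbK.
by rewrite big1 // => q _; rewrite mulr0.
Qed.

End Fibers.

Arguments fiber_factor {R d n} A p q k j.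

Theorem theorem1 (R : realType) (d : nat) (n : 'I_d -> nat)
    (A : tensor R n) (p : 'I_d) :
  (1 <= d)%N ->
  exists G : forall k : 'I_d,
      'I_(n k) -> 'M[R]_(tt_rank d (nnz_fibers A p) k,
                         tt_rank d (nnz_fibers A p) k.+1),
    (forall i : mindex n, A i = tt_eval G i) /\
    (forall k : 'I_d, k != p ->
       forall (j : 'I_(n k)) a b, G k j a b = 0 \/ G k j a b = 1).
Proof.
move=> d_gt0.
pose u k j (x : 'I_(nnz_fibers A p)) := fiber_factor A p (enum_val x) k j.
exists (cp_core u); split.
  by move=> i; rewrite tt_eval_cp_core // (sum_nz_fibers A p i) big_enum_val.
move=> k kp j a b.
have lt1d : (1 < d)%N.
  rewrite ltnNge; apply: contra kp => led1; apply/eqP/ord_inj.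
  by move: (ltn_ord k) (ltn_ord p); lia.
have [-> | [x ->]] := cp_core_entry u j a b lt1d; first by left.
by rewrite /u /fiber_factor (negbTE kp); case: eqP; [right | left].
Qed.
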